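(* Let $\Gamma$ be a connected web with a natural coloring $c:E(\Gamma)\to\mathbb{Z}_3$. For any $i\in\mathbb{Z}_3$, let $M$ be the one manifold which is the closure of the complement in $\Gamma$ of the edges $e$ with $c(e)=i$. Then $S^2-M$ consists of a connected planar surface $P$ with $\partial P=M$ together with a collection of disks.
   Context: A web is an oriented graph in $S^2$ with trivalent vertices each a source or a sink. Natural coloring: label one face $f$ of $S^2-\Gamma$ by $0$ and each other face $f'$ by the algebraic intersection number mod $3$ of an arc from the interior of $f$ to the interior of $f'$, transverse to the edges and missing the vertices, with the oriented edges of $\Gamma$ (well defined since $\Gamma$ is a $\mathbb{Z}_3$-cycle). Then color edges between faces labeled $0$ and $1$ by $1$, between faces labeled $1$ and $2$ by $2$, and between faces labeled $2$ and $0$ by $0$. This yields a $3$-edge coloring. *)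

(* Webs in S^2 are modelled as combinatorial maps
   (rotation systems) of genus 0. *)
From mathcomp Require Import all_boot all_algebra.
Set Implicit Arguments. Unset Strict Implicit. Unset Printing Implicit Defensive.
Import GRing.Theory.
Local Open Scope ring_scope.

(* Darts (half-edges) D.  alpha d = the other half of the edge of d;
   sigma d = next dart counterclockwise around the vertex of d.
   Vertices = sigma-orbits, edges = alpha-orbits, faces = orbits of
   face_perm = sigma \o alpha; the face of d (the phi-orbit of d) is the
   face on the right of d (d pointing away from its vertex).
   o d = true iff the edge of d is oriented away from the vertex of d. *)
Definition face_perm (D : finType) (alpha sigma : D -> D) : D -> D :=
  fun d => sigma (alpha d).

Definition map_rel (D : finType) (alpha sigma : D -> D) : rel D :=
  fun x y => (y == alpha x) || (y == sigma x).

Definition connected_web (D : finType) (alpha sigma : D -> D) (o : D -> bool)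
  : Prop :=
  [/\ injective sigma,
      (forall d, alpha (alpha d) = d) /\ (forall d, alpha d != d),
      (forall d, order sigma d = 3%N),
      (* oriented edges; every vertex is a source or a sink *)
      (forall d, o (alpha d) = ~~ o d) /\ (forall d, o (sigma d) = o d) &
      (* connected, and the surface of the map is the sphere:
         V - E + F = 2 *)
      (forall d d', connect (map_rel alpha sigma) d d') /\
      (fcard sigma (predT : pred D) + fcard (face_perm alpha sigma) (predT : pred D)
         = #|D|./2 + 2)%N ].

Definition sgn3 (b : bool) : 'Z_3 := if b then 1 else -1.

(* lab d = label of the face on the right of d.  Labels are constant on
   faces, some face is labelled 0, and crossing the edge of d from its
   left face to its right face changes the label by the algebraic
   intersection number (+1 if the edge is oriented along d, -1 otherwise). *)
Definition natural_labeling (D : finType) (alpha sigma : D -> D) (o : D -> bool)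
  (lab : D -> 'Z_3) : Prop :=
  [/\ (forall d, lab (face_perm alpha sigma d) = lab d),
      (forall d, lab d - lab (alpha d) = sgn3 (o d)) &
      exists d0, lab d0 = 0 ].

(* Natural edge coloring: edge between faces labelled a and a+1 gets color
   a+1 (0|1 -> 1, 1|2 -> 2, 2|0 -> 0). *)
Definition edge_color (D : finType) (alpha : D -> D) (lab : D -> 'Z_3) (d : D)
  : 'Z_3 :=
  if lab (alpha d) == lab d + 1 then lab (alpha d) else lab d.

(* Regions of S^2 - M, M = union of the closed edges of color <> i:
   faces glued across the (open) edges of color i. *)
Definition region_rel (D : finType) (alpha sigma : D -> D) (lab : D -> 'Z_3)
  (i : 'Z_3) : rel D :=
  fun x y => (y == face_perm alpha sigma x) ||
             ((y == alpha x) && (edge_color alpha lab x == i)).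

(* Circles of the 1-manifold M: darts of color <> i, joined along edges and
   through vertices (each vertex has exactly two darts of color <> i). *)
Definition circle_rel (D : finType) (alpha sigma : D -> D) (lab : D -> 'Z_3)
  (i : 'Z_3) : rel D :=
  fun x y => [&& edge_color alpha lab x != i, edge_color alpha lab y != i &
              [|| y == alpha x, y == sigma x | y == sigma (sigma x)]].

(* Across an edge the labels of the two adjacent faces differ by 1, so the
   edges of colour i are exactly those separating two faces with labels other
   than i + 1.  Hence a face labelled i + 1 is a region of S^2 - M on its own,
   a disk bounded by one circle of M, and every circle of M arises in this
   way.  Two faces with labels other than i + 1 that meet at a trivalent
   vertex share an edge of colour i, and so do the two faces on either side
   of an edge when neither is labelled i + 1; as Gamma is connected, all such
   faces form a single region P, which lies along every circle of M. *)
From mathcomp Require Import all_boot all_algebra.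
Set Implicit Arguments.
Unset Strict Implicit.
Unset Printing Implicit Defensive.
Import GRing.Theory.
Local Open Scope ring_scope.

Lemma rev_connect_sym (T : finType) (e : rel T) :
  (forall x y, e x y -> connect e y x) -> connect_sym e.
Proof.
move=> e_rev; apply: symmetric_from_pre => x y exy.
suff : connect [rel u v | e v u] x y by rewrite connect_rev.
by apply: connect_sub exy => u v /e_rev; rewrite connect_rev.
Qed.

Lemma homo_connect (T : finType) (e e' : rel T) (f : T -> T) :
  {homo f : x y / e x y >-> connect e' x y} ->
  {homo f : x y / connect e x y >-> connect e' x y}.
Proof.
move=> f_e x _ /connectP[p e_p ->]; elim: p x e_p => //= y p IHp x /andP[exy].
by move/IHp; apply: connect_trans; apply: f_e.
Qed.

Lemma connect_sub_in (T : finType) (e e' : rel T) (a : {pred T}) :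
  (forall x y, x \in a -> e x y -> (y \in a) && connect e' x y) ->
  forall x y, x \in a -> connect e x y -> connect e' x y.
Proof.
move=> e_a x _ a_x /connectP[p e_p ->].
elim: p x a_x e_p => //= y p IHp x a_x /andP[/(e_a _ _ a_x)/andP[a_y e'xy]].
by move/(IHp _ a_y); apply: connect_trans.
Qed.

Section RegionsOfNaturalColoring.

Variables (D : finType) (alpha sigma : D -> D) (lab : D -> 'Z_3) (i : 'Z_3).
Hypothesis alphaK : involutive alpha.
Hypothesis sigma_inj : injective sigma.
Hypothesis sigma_order : forall d, order sigma d = 3%N.
Hypothesis lab_face : forall d, lab (face_perm alpha sigma d) = lab d.
Hypothesis lab_alpha : forall d, lab (alpha d) != lab d.

Local Notation phi := (face_perm alpha sigma).
Local Notation c := (edge_color alpha lab).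
Local Notation reg := (region_rel alpha sigma lab i).
Local Notation circ := (circle_rel alpha sigma lab i).

Lemma sigma3 d : sigma (sigma (sigma d)) = d.
Proof. by have := iter_order sigma_inj d; rewrite sigma_order. Qed.

Lemma lab_sigma d : lab (sigma d) = lab (alpha d).
Proof. by rewrite -[RHS]lab_face /face_perm alphaK. Qed.

Lemma edge_color_alpha d : c (alpha d) = c d.
Proof.
rewrite /edge_color alphaK; have := lab_alpha d.
move: (lab d) (lab (alpha d)) => a b ba; apply/eqP; move: ba.
by case: a b => [[|[|[|?]]] ?] [[|[|[|?]]] ?].
Qed.

Lemma edge_color_eq d :
  lab d != i + 1 -> lab (alpha d) != i + 1 -> c d = i.
Proof.
rewrite /edge_color; have := lab_alpha d.
move: (lab d) (lab (alpha d)) => a b ba ai bi; apply/eqP; move: ba ai bi.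
by case: a b i => [[|[|[|?]]] ?] [[|[|[|?]]] ?] [[|[|[|?]]] ?].
Qed.

Lemma edge_color_neq d : lab d == i + 1 -> c d != i.
Proof.
rewrite /edge_color; have := lab_alpha d.
move: (lab d) (lab (alpha d)) => a b.
by case: a b i => [[|[|[|?]]] ?] [[|[|[|?]]] ?] [[|[|[|?]]] ?].
Qed.

Lemma reg_face d : connect reg d (phi d).
Proof. by apply: connect1; rewrite /region_rel eqxx. Qed.

Lemma reg_alpha d : c d = i -> connect reg d (alpha d).
Proof. by move=> cd; apply: connect1; rewrite /region_rel cd !eqxx orbT. Qed.

Lemma connect_reg_sym : connect_sym reg.
Proof.
have phi_inj : injective phi by move=> x y /sigma_inj/(can_inj alphaK).
apply: rev_connect_sym => x y /orP[/eqP-> | /andP[/eqP-> cx]].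
  have : fconnect phi (phi x) x by rewrite fconnect_sym // fconnect1.
  by apply: connect_sub => u v /eqP<-; apply: reg_face.
by rewrite -{2}[x]alphaK; apply: reg_alpha; rewrite edge_color_alpha (eqP cx).
Qed.

Lemma connect_circ_sym : connect_sym circ.
Proof.
have vertex_or_edge_sym x y :
    [|| y == alpha x, y == sigma x | y == sigma (sigma x)] ->
    [|| x == alpha y, x == sigma y | x == sigma (sigma y)].
  by case/or3P=> /eqP->; rewrite ?alphaK ?sigma3 eqxx ?orbT.
apply: sym_connect_sym => x y; rewrite /circle_rel.
by apply/and3P/and3P => -[cx cy /vertex_or_edge_sym].
Qed.

Lemma reg_sigma d :
  lab d != i + 1 -> lab (sigma d) != i + 1 -> connect reg d (sigma d).
Proof.
rewrite lab_sigma => ld lad.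
apply: connect_trans (reg_alpha (edge_color_eq ld lad)) _.
by rewrite -{2}[d]alphaK; apply: reg_face.
Qed.

Lemma reg_vertex d d' : fconnect sigma d d' ->
  lab d != i + 1 -> lab d' != i + 1 -> connect reg d d'.
Proof.
rewrite fconnect_orbit /orbit sigma_order !inE => /or3P[] /eqP-> ld ld' //.
- exact: reg_sigma.
have [lsd | lsd] := boolP (lab (sigma d) != i + 1).
  exact: connect_trans (reg_sigma ld lsd) (reg_sigma lsd ld').
rewrite connect_reg_sym -[X in connect _ _ X]sigma3.
by apply: reg_sigma; rewrite ?sigma3.
Qed.

Definition vertex_rep d := if lab d == i + 1 then sigma d else d.

Lemma vertex_rep_lab d : lab (vertex_rep d) != i + 1.
Proof.
rewrite /vertex_rep; case: ifP => [/eqP ld | /negbT //].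
by rewrite lab_sigma -ld lab_alpha.
Qed.

Lemma fconnect_vertex_rep d : fconnect sigma d (vertex_rep d).
Proof. by rewrite /vertex_rep; case: ifP; rewrite ?fconnect1. Qed.

Lemma reg_vertex_rep d d' :
  fconnect sigma d d' -> connect reg (vertex_rep d) (vertex_rep d').
Proof.
move=> dd'; apply: reg_vertex; rewrite ?vertex_rep_lab //.
apply: connect_trans (connect_trans _ dd') (fconnect_vertex_rep d').
by rewrite fconnect_sym // fconnect_vertex_rep.
Qed.

Lemma reg_vertex_rep_alpha d :
  lab d != i + 1 -> connect reg (vertex_rep d) (vertex_rep (alpha d)).
Proof.
move=> ld; have ld' : lab (phi d) != i + 1 by rewrite lab_face.
rewrite {1}/vertex_rep (negbTE ld); apply: connect_trans (reg_face d) _.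
have <- : vertex_rep (phi d) = phi d by rewrite /vertex_rep (negbTE ld').
by rewrite connect_reg_sym; apply/reg_vertex_rep/fconnect1.
Qed.

Lemma reg_map_rel d d' :
  map_rel alpha sigma d d' -> connect reg (vertex_rep d) (vertex_rep d').
Proof.
case/orP=> /eqP->; last exact/reg_vertex_rep/fconnect1.
have [ld | /negPn/eqP ld] := boolP (lab d != i + 1).
  exact: reg_vertex_rep_alpha.
rewrite connect_reg_sym -{2}[d]alphaK; apply: reg_vertex_rep_alpha.
by rewrite -ld lab_alpha.
Qed.

Hypothesis map_connected : forall d d', connect (map_rel alpha sigma) d d'.

Lemma reg_off_disks d d' :
  lab d != i + 1 -> lab d' != i + 1 -> connect reg d d'.
Proof.
move=> ld ld'; have := homo_connect reg_map_rel (map_connected d d').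
by rewrite /vertex_rep (negbTE ld) (negbTE ld').
Qed.

Lemma circ_meets_off_disk d :
  c d != i -> exists2 e, connect circ d e & lab e != i + 1.
Proof.
move=> cd; have [ld | /negPn ld] := boolP (lab d != i + 1); first by exists d.
exists (alpha d); last by rewrite -(eqP ld) lab_alpha.
by apply: connect1; rewrite /circle_rel edge_color_alpha cd eqxx.
Qed.

Lemma circ_face d : lab d == i + 1 -> connect circ d (phi d).
Proof.
move=> ld; have cd := edge_color_neq ld.
have cpd : c (phi d) != i by rewrite edge_color_neq ?lab_face.
apply: (@connect_trans _ _ (alpha d)); apply: connect1;
  by rewrite /circle_rel edge_color_alpha cd ?cpd ?eqxx ?orbT.
Qed.

Lemma circ_disk_region d e :
  lab d == i + 1 -> connect reg d e -> connect circ d e.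
Proof.
apply: (connect_sub_in (a := [pred x | lab x == i + 1])) => x y.
rewrite !inE => lx /orP[/eqP-> | /andP[_ cx]]; last first.
  by rewrite (negbTE (edge_color_neq lx)) in cx.
by rewrite lab_face lx circ_face.
Qed.

Theorem region_decomposition (x0 : D) :
  exists d0 : D,
    (forall d, c d != i -> exists2 e, connect circ d e & connect reg d0 e) /\
    (forall d, ~~ connect reg d0 d ->
       (exists e, c e != i /\ connect reg d e) /\
       (forall e1 e2, c e1 != i -> c e2 != i ->
          connect reg d e1 -> connect reg d e2 -> connect circ e1 e2)).
Proof.
exists (vertex_rep x0); split=> [d /circ_meets_off_disk[e de le] | d nd].
  by exists e => //; apply: reg_off_disks; rewrite ?vertex_rep_lab.
have ld : lab d == i + 1.
  by apply: contraNT nd => ld; apply: reg_off_disks; rewrite ?vertex_rep_lab.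
split=> [|e1 e2 _ _ /(circ_disk_region ld) de1 /(circ_disk_region ld) de2].
  by exists d; rewrite edge_color_neq.
by apply: connect_trans de2; rewrite connect_circ_sym.
Qed.

End RegionsOfNaturalColoring.

Theorem mainTheorem11 (D : finType) (alpha sigma : D -> D) (o : D -> bool)
  (lab : D -> 'Z_3) (i : 'Z_3) :
  connected_web alpha sigma o ->
  natural_labeling alpha sigma o lab ->
  let reg := region_rel alpha sigma lab i in
  let circ := circle_rel alpha sigma lab i in
  let c := edge_color alpha lab in
  exists d0 : D,
    (forall d, c d != i -> exists2 e, connect circ d e & connect reg d0 e) /\
    (forall d, ~~ connect reg d0 d ->
       (exists e, c e != i /\ connect reg d e) /\
       (forall e1 e2, c e1 != i -> c e2 != i ->
          connect reg d e1 -> connect reg d e2 -> connect circ e1 e2)).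
Proof.
move=> [sigma_inj [alphaK _] sigma_order _ [map_connected _]].
move=> [lab_face lab_cross [x0 _]].
have lab_alpha d : lab (alpha d) != lab d.
  by rewrite -subr_eq0 -opprB lab_cross oppr_eq0; case: (o d).
exact: region_decomposition.
Qed.
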